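(* Let $F$ be a field with $\mathrm{char}\,F\ne2$ and let $A$ be an involutive $F$-algebra. The following are equivalent: (i) $A$ is von-Neumann finite; (ii) every $3$-dimensional subalgebra of $A$ is either commutative or associative; (iii) every $3$-dimensional subalgebra of $A$ is either commutative or isomorphic to the algebra $U$ of upper triangular $2\times2$ matrices over $F$.
   Context: Algebras are unital, with bilinear not necessarily associative multiplication. $A$ is involutive if there is an anti-automorphism $a\mapsto\bar a$ with $\bar{\bar a}=a$, $a+\bar a\in F1$ and $a\bar a\in F1$ for all $a\in A$. $A$ is von-Neumann finite if $ab=1$ implies $ba=1$ for all $a,b\in A$. *)

From HB Require Import structures.
From mathcomp Require Import all_boot all_order all_algebra.
Set Implicit Arguments. Unset Strict Implicit. Unset Printing Implicit Defensive.
Import GRing.Theory.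
Local Open Scope ring_scope.

(* A unital, not necessarily associative F-algebra is given by a vector space
   V over F together with a bilinear multiplication [mul] and a unit [one]. *)
Section NAlg.
Variables (F : fieldType) (V : lmodType F).

Definition bilinear_mul (mul : V -> V -> V) : Prop :=
  (forall (a : F) (x y z : V), mul (a *: x + y) z = a *: mul x z + mul y z) /\
  (forall (a : F) (x y z : V), mul x (a *: y + z) = a *: mul x y + mul x z).

Definition is_unit_elt (mul : V -> V -> V) (one : V) : Prop :=
  forall x, mul one x = x /\ mul x one = x.

Definition involutive_alg (mul : V -> V -> V) (one : V) (bar : V -> V) : Prop :=
  [/\ (forall (a : F) (x y : V), bar (a *: x + y) = a *: bar x + bar y),
      bijective bar,
      (forall x y, bar (mul x y) = mul (bar y) (bar x))
    & (forall x, bar (bar x) = x)] /\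
  ((forall x, exists c : F, x + bar x = c *: one) /\
   (forall x, exists c : F, mul x (bar x) = c *: one)).

Definition vN_finite (mul : V -> V -> V) (one : V) : Prop :=
  forall a b, mul a b = one -> mul b a = one.

Definition span3 (e1 e2 e3 : V) : V -> Prop :=
  fun x => exists a b c : F, x = a *: e1 + b *: e2 + c *: e3.

Definition lin_indep3 (e1 e2 e3 : V) : Prop :=
  forall a b c : F, a *: e1 + b *: e2 + c *: e3 = 0 -> [/\ a = 0, b = 0 & c = 0].

Definition is_subalg (mul : V -> V -> V) (one : V) (S : V -> Prop) : Prop :=
  S one /\ (forall x y, S x -> S y -> S (mul x y)).

Definition commutative_on (mul : V -> V -> V) (S : V -> Prop) : Prop :=
  forall x y, S x -> S y -> mul x y = mul y x.

Definition associative_on (mul : V -> V -> V) (S : V -> Prop) : Prop :=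
  forall x y z, S x -> S y -> S z -> mul x (mul y z) = mul (mul x y) z.

Definition upper_tri (M : 'M[F]_2) : Prop :=
  forall i j : 'I_2, (j < i)%N -> M i j = 0.

Definition iso_to_U (mul : V -> V -> V) (S : V -> Prop) : Prop :=
  exists g : 'M[F]_2 -> V,
    [/\ (forall (a : F) (M N : 'M[F]_2), upper_tri M -> upper_tri N ->
           g (a *: M + N) = a *: g M + g N),
        (forall M, upper_tri M -> S (g M)),
        (forall x, S x -> exists2 M, upper_tri M & g M = x),
        (forall M N, upper_tri M -> upper_tri N -> g M = g N -> M = N)
      & (forall M N, upper_tri M -> upper_tri N -> g (M *m N) = mul (g M) (g N))].

End NAlg.

From mathcomp Require Import all_boot all_algebra.
From mathcomp Require Import ring.
From Stdlib Require Import Classical.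
Set Implicit Arguments. Unset Strict Implicit. Unset Printing Implicit Defensive.
Import GRing.Theory.
Local Open Scope ring_scope.

(* Every element satisfies x^2 = t x - n with scalars t, n (from x + bar x and
   x bar x), and skew elements (bar x = -x) have scalar squares and anticommutators.
   In a noncommutative 3-dimensional subalgebra, the skew parts u, v of two
   noncommuting elements span it together with 1, and their commutator lies in
   span(u, v); rescaling u or v and taking w = [u, v] or [v, u] gives a basis
   1, z, w of skew elements with zw - wz = 2w.  Then z^2 = p, w^2 = q, zw = r + w
   and wz = r - w for scalars p, q, r.  If q, r or p - 1 were nonzero, explicit
   A, B with AB = 1 and BA = 1 + kw, k <> 0, would contradict von Neumann
   finiteness; so z^2 = 1, w^2 = 0 and zw = -wz = w, the relations of diag(1,-1)
   and E_12 in U.  Conversely, if ab = 1 with 1, a, b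
   independent, then span(1, a, b) is a subalgebra; it cannot be associative, since
   then a = a(ab) = a^2 b = t - n b, so it is commutative and ba = ab = 1. *)

Local Ltac field_nz := field; by do ?[apply/andP; split].

Section Span3.
Variables (F : fieldType) (V : lmodType F).
Implicit Types (e f x y : V).

Definition comb3 e1 e2 e3 (a b c : F) : V := a *: e1 + b *: e2 + c *: e3.

Lemma comb3D e1 e2 e3 a b c a' b' c' :
  comb3 e1 e2 e3 a b c + comb3 e1 e2 e3 a' b' c' =
  comb3 e1 e2 e3 (a + a') (b + b') (c + c').
Proof. by rewrite /comb3 !scalerDl addrACA; congr (_ + _); rewrite addrACA. Qed.

Lemma comb3Z e1 e2 e3 k a b c :
  k *: comb3 e1 e2 e3 a b c = comb3 e1 e2 e3 (k * a) (k * b) (k * c).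
Proof. by rewrite /comb3 !scalerDr !scalerA. Qed.

Lemma comb3N e1 e2 e3 a b c : - comb3 e1 e2 e3 a b c = comb3 e1 e2 e3 (- a) (- b) (- c).
Proof. by rewrite -scaleN1r comb3Z !mulN1r. Qed.

Lemma comb3_e1 e1 e2 e3 k : k *: e1 = comb3 e1 e2 e3 k 0 0.
Proof. by rewrite /comb3 !scale0r !addr0. Qed.

Lemma comb3_e2 e1 e2 e3 k : k *: e2 = comb3 e1 e2 e3 0 k 0.
Proof. by rewrite /comb3 !scale0r add0r addr0. Qed.

Lemma comb3_e3 e1 e2 e3 k : k *: e3 = comb3 e1 e2 e3 0 0 k.
Proof. by rewrite /comb3 !scale0r !add0r. Qed.

Lemma comb3_inj e1 e2 e3 a b c a' b' c' : lin_indep3 e1 e2 e3 ->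
  comb3 e1 e2 e3 a b c = comb3 e1 e2 e3 a' b' c' -> [/\ a = a', b = b' & c = c'].
Proof.
move=> ind /eqP; rewrite -subr_eq0 comb3N comb3D => /eqP/ind.
by case=> /subr0_eq-> /subr0_eq-> /subr0_eq->.
Qed.

Lemma comb3_solve e1 e2 e3 a b c : c != 0 -> a *: e1 + b *: e2 + c *: e3 = 0 ->
  e3 = (- (a / c)) *: e1 + (- (b / c)) *: e2.
Proof.
move=> c0 /eqP; rewrite addr_eq0 => /eqP abc; apply: (scalerI c0).
rewrite -[c *: e3]opprK -abc scalerDr !scalerA !mulrN !(mulrCA c) mulfV //.
by rewrite !mulr1 !scaleNr opprD.
Qed.

Lemma span3D e1 e2 e3 x y :
  span3 e1 e2 e3 x -> span3 e1 e2 e3 y -> span3 e1 e2 e3 (x + y).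
Proof.
move=> [a [b [c ->]]] [a' [b' [c' ->]]].
by exists (a + a'), (b + b'), (c + c'); rewrite -[_ + _ + _]/(comb3 _ _ _ _ _ _) comb3D.
Qed.

Lemma span3Z e1 e2 e3 k x : span3 e1 e2 e3 x -> span3 e1 e2 e3 (k *: x).
Proof.
move=> [a [b [c ->]]].
by exists (k * a), (k * b), (k * c); rewrite -[_ + _ + _]/(comb3 _ _ _ _ _ _) comb3Z.
Qed.

Lemma span3B e1 e2 e3 x y :
  span3 e1 e2 e3 x -> span3 e1 e2 e3 y -> span3 e1 e2 e3 (x - y).
Proof. by move=> Sx Sy; rewrite -scaleN1r; apply/span3D/span3Z. Qed.

Lemma span3_e1 e1 e2 e3 : span3 e1 e2 e3 e1.
Proof. by exists 1, 0, 0; rewrite scale1r !scale0r !addr0. Qed.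

Lemma span3_e2 e1 e2 e3 : span3 e1 e2 e3 e2.
Proof. by exists 0, 1, 0; rewrite scale1r !scale0r add0r addr0. Qed.

Lemma span3_e3 e1 e2 e3 : span3 e1 e2 e3 e3.
Proof. by exists 0, 0, 1; rewrite scale1r !scale0r !add0r. Qed.

Lemma span3_min e1 e2 e3 f1 f2 f3 :
  span3 f1 f2 f3 e1 -> span3 f1 f2 f3 e2 -> span3 f1 f2 f3 e3 ->
  forall x, span3 e1 e2 e3 x -> span3 f1 f2 f3 x.
Proof. by move=> S1 S2 S3 x [a [b [c ->]]]; apply/span3D; [apply/span3D|]; apply/span3Z. Qed.

Lemma ord3_ind (P : 'I_3 -> Prop) :
  P ord0 -> P (lift ord0 ord0) -> P (lift ord0 (lift ord0 ord0)) -> forall i, P i.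
Proof.
by move=> P0 P1 P2 [[|[|[|//]]] lt_i3]; [move: P0 | move: P1 | move: P2];
  congr P; apply: val_inj.
Qed.

Definition row_comb e1 e2 e3 (r : 'rV[F]_3) : V :=
  \sum_(i < 3) r 0 i *: tnth [tuple e1; e2; e3] i.

Lemma row_combE e1 e2 e3 r :
  row_comb e1 e2 e3 r =
  comb3 e1 e2 e3 (r 0 ord0) (r 0 (lift ord0 ord0)) (r 0 (lift ord0 (lift ord0 ord0))).
Proof. by rewrite /row_comb !big_ord_recl big_ord0 addr0 addrA. Qed.

Lemma row_comb_mulmx e1 e2 e3 (r : 'rV_3) (M : 'M_3) :
  row_comb e1 e2 e3 (r *m M) = \sum_(i < 3) r 0 i *: row_comb e1 e2 e3 (row i M).
Proof.
rewrite /row_comb; under eq_bigr do rewrite mxE scaler_suml.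
rewrite exchange_big; apply: eq_bigr => i _; rewrite scaler_sumr.
by apply: eq_bigr => j _; rewrite !mxE scalerA.
Qed.

Lemma span3_basis e1 e2 e3 f1 f2 f3 :
  span3 e1 e2 e3 f1 -> span3 e1 e2 e3 f2 -> span3 e1 e2 e3 f3 -> lin_indep3 f1 f2 f3 ->
  forall x, span3 e1 e2 e3 x -> span3 f1 f2 f3 x.
Proof.
move=> [a1 [b1 [c1 E1]]] [a2 [b2 [c2 E2]]] [a3 [b3 [c3 E3]]] ind.
pose M : 'M[F]_3 := \matrix_(i, j)
  tnth (tnth [tuple [tuple a1; b1; c1]; [tuple a2; b2; c2]; [tuple a3; b3; c3]] i) j.
have rowM i : row_comb e1 e2 e3 (row i M) = tnth [tuple f1; f2; f3] i.
  by rewrite row_combE !mxE; elim/ord3_ind: i.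
have coordM r : row_comb f1 f2 f3 r = row_comb e1 e2 e3 (r *m M).
  by rewrite row_comb_mulmx; apply: eq_bigr => i _; rewrite rowM.
have f_free r : row_comb f1 f2 f3 r = 0 -> r = 0.
  by rewrite row_combE => /ind[r0 r1 r2]; apply/rowP; elim/ord3_ind; rewrite mxE.
have unit_M : M \in unitmx.
  rewrite -row_free_unit -kermx_eq0; apply/eqP/row_matrixP => i; rewrite row0.
  apply: f_free; rewrite coordM -row_mul mulmx_ker row0 row_combE.
  by rewrite !mxE /comb3 !scale0r !addr0.
have e_in k : span3 f1 f2 f3 (tnth [tuple e1; e2; e3] k).
  have -> : tnth [tuple e1; e2; e3] k = row_comb e1 e2 e3 (row k (invmx M) *m M).
    rewrite -row_mul mulVmx // row_combE !mxE.
    by elim/ord3_ind: k; rewrite /comb3 /= ?scale1r ?scale0r ?addr0 ?add0r.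
  by rewrite -coordM row_combE; do 3!eexists.
by apply: span3_min; [apply: (e_in ord0) | apply: (e_in (lift ord0 ord0)) |
  apply: (e_in (lift ord0 (lift ord0 ord0)))].
Qed.

Lemma span3_eq e1 e2 e3 f1 f2 f3 :
  span3 e1 e2 e3 f1 -> span3 e1 e2 e3 f2 -> span3 e1 e2 e3 f3 -> lin_indep3 f1 f2 f3 ->
  forall x, span3 e1 e2 e3 x <-> span3 f1 f2 f3 x.
Proof. by move=> S1 S2 S3 ind x; split; [apply: span3_basis | apply: span3_min]. Qed.

End Span3.

Section UpperTriangular.
Variable F : fieldType.

Lemma ord2_ind (P : 'I_2 -> Prop) : P ord0 -> P ord_max -> forall i, P i.
Proof. by move=> P0 P1 [[|[|//]] lt_i2]; [move: P0 | move: P1]; congr P; apply: val_inj. Qed.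

Lemma mulmx2E (M N : 'M[F]_2) i j :
  (M *m N) i j = M i ord0 * N ord0 j + M i ord_max * N ord_max j.
Proof. by rewrite mxE !big_ord_recl big_ord0 addr0; congr (_ + M i _ * N _ j); apply: val_inj. Qed.

Lemma upper_tri_mul (M N : 'M[F]_2) : upper_tri M -> upper_tri N -> upper_tri (M *m N).
Proof.
move=> uM uN i j lt_ji; rewrite mxE big1 // => k _.
by case: (ltnP k i) => [/uM->|le_ik]; rewrite ?mul0r // uN ?mulr0 // (leq_trans lt_ji).
Qed.

End UpperTriangular.

Section InvolutiveAlgebra.
Variables (F : fieldType) (V : lmodType F).
Variables (mul : V -> V -> V) (one : V) (bar : V -> V).
Hypothesis two_neq0 : (2%:R : F) != 0.
Hypothesis mul_bilin : bilinear_mul mul.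
Hypothesis mul_unit : is_unit_elt mul one.
Hypothesis bar_inv : involutive_alg mul one bar.
Implicit Types (e x y z u v w : V).

Lemma amulDl x y z : mul (x + y) z = mul x z + mul y z.
Proof. by have := mul_bilin.1 1 x y z; rewrite !scale1r. Qed.

Lemma amulDr x y z : mul x (y + z) = mul x y + mul x z.
Proof. by have := mul_bilin.2 1 x y z; rewrite !scale1r. Qed.

Lemma amul0l x : mul 0 x = 0.
Proof. by apply: (addrI (mul 0 x)); rewrite -amulDl !addr0. Qed.

Lemma amul0r x : mul x 0 = 0.
Proof. by apply: (addrI (mul x 0)); rewrite -amulDr !addr0. Qed.

Lemma amulZl a x y : mul (a *: x) y = a *: mul x y.
Proof. by have := mul_bilin.1 a x 0 y; rewrite !addr0 amul0l addr0. Qed.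

Lemma amulZr a x y : mul x (a *: y) = a *: mul x y.
Proof. by have := mul_bilin.2 a x y 0; rewrite !addr0 amul0r addr0. Qed.

Lemma amulNl x y : mul (- x) y = - mul x y.
Proof. by rewrite -scaleN1r amulZl scaleN1r. Qed.

Lemma amulNr x y : mul x (- y) = - mul x y.
Proof. by rewrite -scaleN1r amulZr scaleN1r. Qed.

Lemma amulBl x y z : mul (x - y) z = mul x z - mul y z.
Proof. by rewrite amulDl amulNl. Qed.

Lemma amulBr x y z : mul x (y - z) = mul x y - mul x z.
Proof. by rewrite amulDr amulNr. Qed.

Lemma amul1l x : mul one x = x.
Proof. exact: (mul_unit x).1. Qed.

Lemma amul1r x : mul x one = x.
Proof. exact: (mul_unit x).2. Qed.

Lemma amul_comb3 e1 e2 e3 a1 a2 a3 b1 b2 b3 :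
  mul (comb3 e1 e2 e3 a1 a2 a3) (comb3 e1 e2 e3 b1 b2 b3) =
  (a1 * b1) *: mul e1 e1 + (a1 * b2) *: mul e1 e2 + (a1 * b3) *: mul e1 e3 +
  (a2 * b1) *: mul e2 e1 + (a2 * b2) *: mul e2 e2 + (a2 * b3) *: mul e2 e3 +
  (a3 * b1) *: mul e3 e1 + (a3 * b2) *: mul e3 e2 + (a3 * b3) *: mul e3 e3.
Proof. by rewrite /comb3 !amulDl !amulDr !amulZl !amulZr !scalerA !addrA. Qed.

Lemma one_eq0_trivial : one = 0 -> forall x, x = 0.
Proof. by move=> one0 x; rewrite -[x]amul1l one0 amul0l. Qed.

Lemma indep3_one_neq0 e1 e2 e3 : lin_indep3 e1 e2 e3 -> one != 0.
Proof.
move=> ind; apply/eqP => /one_eq0_trivial triv.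
by have [/eqP] := ind 1 0 0 (triv _); rewrite oner_eq0.
Qed.

Definition commutator x y := mul x y - mul y x.

Lemma commutatorC x y : commutator y x = - commutator x y.
Proof. by rewrite /commutator opprB. Qed.

Lemma commutator_shiftl x y a : commutator (x - a *: one) y = commutator x y.
Proof.
by rewrite /commutator amulBl amulBr amulZl amulZr amul1l amul1r opprB addrA subrK.
Qed.

Lemma commutator_shift x y a b :
  commutator (x - a *: one) (y - b *: one) = commutator x y.
Proof. by rewrite commutator_shiftl commutatorC commutator_shiftl -commutatorC. Qed.

Lemma commutatorDl x y z : commutator (x + y) z = commutator x z + commutator y z.
Proof. by rewrite /commutator amulDl amulDr opprD addrACA. Qed.

Lemma commutatorZl a x y : commutator (a *: x) y = a *: commutator x y.
Proof. by rewrite /commutator amulZl amulZr scalerBr. Qed.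

Lemma commutatorxx x : commutator x x = 0.
Proof. exact: subrr. Qed.

Lemma commutator0l x : commutator 0 x = 0.
Proof. by rewrite /commutator amul0l amul0r subrr. Qed.

Lemma commutator_lin_dep u v b c : b *: u + c *: v = 0 -> b *: commutator u v = 0.
Proof.
move=> buv; have <- : commutator (b *: u + c *: v) v = b *: commutator u v.
  by rewrite commutatorDl !commutatorZl commutatorxx scaler0 addr0.
by rewrite buv commutator0l.
Qed.

Lemma commutator_eigen u v b g : commutator u v = b *: u + g *: v -> g != 0 ->
  commutator ((2%:R / g) *: u) (commutator u v) = 2%:R *: commutator u v.
Proof.
move=> uv g0; rewrite commutatorZl {1}uv commutatorC commutatorDl !commutatorZl.
by rewrite commutatorxx scaler0 add0r (commutatorC u v) !scalerN opprK scalerA divfK.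
Qed.

Lemma barD x y : bar (x + y) = bar x + bar y.
Proof. by have [[lin _ _ _] _] := bar_inv; have := lin 1 x y; rewrite !scale1r. Qed.

Lemma bar0 : bar 0 = 0.
Proof. by apply: (addrI (bar 0)); rewrite -barD !addr0. Qed.

Lemma barZ a x : bar (a *: x) = a *: bar x.
Proof. by have [[lin _ _ _] _] := bar_inv; rewrite -[a *: x]addr0 lin bar0 addr0. Qed.

Lemma barN x : bar (- x) = - bar x.
Proof. by rewrite -scaleN1r barZ scaleN1r. Qed.

Lemma barB x y : bar (x - y) = bar x - bar y.
Proof. by rewrite barD barN. Qed.

Lemma barM x y : bar (mul x y) = mul (bar y) (bar x).
Proof. by have [[]] := bar_inv. Qed.

Lemma barK x : bar (bar x) = x.
Proof. by have [[]] := bar_inv. Qed.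

Lemma bar1 : bar one = one.
Proof. by have := barM one (bar one); rewrite amul1l barK amul1l => /esym. Qed.

Lemma sqr_quadratic x : exists t n, mul x x = t *: x - n *: one.
Proof.
have [t xt] := bar_inv.2.1 x; have [n xn] := bar_inv.2.2 x; exists t, n.
have bx : bar x = t *: one - x by rewrite -xt addrC addKr.
by rewrite -xn bx amulBr amulZr amul1r opprB addrC subrK.
Qed.

Definition skew x := bar x = - x.

Lemma skewZ a x : skew x -> skew (a *: x).
Proof. by move=> sx; rewrite /skew barZ sx scalerN. Qed.

Lemma skew_commutator u v : skew u -> skew v -> skew (commutator u v).
Proof.
by move=> su sv; rewrite /skew /commutator barB !barM su sv !amulNl !amulNr !opprK opprB.
Qed.

Lemma skew_sqr u : skew u -> exists k, mul u u = k *: one.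
Proof.
move=> su; have [n un] := bar_inv.2.2 u; exists (- n).
by rewrite scaleNr -un su amulNr opprK.
Qed.

Lemma skew_anticomm u v : skew u -> skew v -> exists s, mul u v + mul v u = s *: one.
Proof.
move=> su sv; have [k uvk] : exists k, mul (u + v) (u + v) = k *: one.
  by apply: skew_sqr; rewrite /skew barD su sv opprD.
have [k1 uk] := skew_sqr su; have [k2 vk] := skew_sqr sv.
exists (k - (k1 + k2)); rewrite scalerBl scalerDl -uvk amulDl !amulDr uk vk.
by rewrite [_ *: one + mul u v]addrC addrACA addrK.
Qed.

Lemma skew_part x t : x + bar x = t *: one -> skew (x - (t / 2%:R) *: one).
Proof.
move=> xt; have bx : bar x = t *: one - x by rewrite -xt addrC addKr.
rewrite /skew barB barZ bar1 bx opprB addrAC -scalerBl.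
by congr (_ *: _ - _); field_nz.
Qed.

Lemma iso_to_U_assoc S : iso_to_U mul S -> associative_on mul S.
Proof.
case=> g [_ _ onto _ g_mul] x y z /onto[M uM <-] /onto[N uN <-] /onto[P uP <-].
by rewrite -!g_mul ?mulmxA //; apply: upper_tri_mul.
Qed.

Lemma iso_to_U_eq S S' : (forall x, S x <-> S' x) -> iso_to_U mul S' -> iso_to_U mul S.
Proof.
move=> SS' [g [g_lin g_in onto g_inj g_mul]].
by exists g; split=> // [M /g_in/SS' | x /SS'/onto].
Qed.

Lemma comb3_mul_table z w p q r :
  mul z z = p *: one -> mul w w = q *: one ->
  mul z w = r *: one + w -> mul w z = r *: one - w ->
  forall a1 a2 a3 b1 b2 b3,
  mul (comb3 one z w a1 a2 a3) (comb3 one z w b1 b2 b3) =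
  comb3 one z w (a1 * b1 + a2 * b2 * p + (a2 * b3 + a3 * b2) * r + a3 * b3 * q)
    (a1 * b2 + a2 * b1) (a1 * b3 + a3 * b1 + a2 * b3 - a3 * b2).
Proof.
move=> zz ww zw wz a1 a2 a3 b1 b2 b3.
rewrite amul_comb3 !amul1l !amul1r zz ww zw wz !scalerDr ?scalerN !scalerA.
rewrite !(comb3_e1 one z w) !(comb3_e2 one z w) !(comb3_e3 one z w) !comb3N !comb3D.
by congr comb3; ring.
Qed.

Definition standard_pair z w :=
  [/\ skew z, skew w, w != 0 & commutator z w = 2%:R *: w].

Lemma standard_pair_products z w : standard_pair z w ->
  exists p q r, [/\ mul z z = p *: one, mul w w = q *: one,
                    mul z w = r *: one + w & mul w z = r *: one - w].
Proof.
case=> sz sw _ zw2.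
have [p zz] := skew_sqr sz; have [q ww] := skew_sqr sw.
have [s zws] := skew_anticomm sz sw.
have zw : mul z w = (s / 2%:R) *: one + w.
  apply: (scalerI two_neq0).
  have -> : 2%:R *: mul z w = (mul z w + mul w z) + commutator z w.
    by rewrite /commutator addrACA subrr addr0 scaler_nat mulr2n.
  by rewrite zws zw2 scalerDr scalerA mulrC divfK.
exists p, q, (s / 2%:R); split=> //.
have -> : mul w z = s *: one - mul z w by rewrite -zws addrC addKr.
rewrite zw opprD addrA -scalerBl; congr (_ *: _ - _); field_nz.
Qed.

Lemma standard_pair_relations z w : vN_finite mul one -> standard_pair z w ->
  [/\ mul z z = one, mul w w = 0, mul z w = w & mul w z = - w].
Proof.
move=> vN std; have [_ _ w0 _] := std.
have [p [q [r [zz ww zw wz]]]] := standard_pair_products std.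
have table := comb3_mul_table zz ww zw wz.
have one_comb : comb3 one z w 1 0 0 = one by rewrite -comb3_e1 scale1r.
have no_defect A B k :
    mul A B = comb3 one z w 1 0 0 -> mul B A = comb3 one z w 1 0 k -> k = 0.
  rewrite one_comb => /vN ->; rewrite /comb3 scale1r !scale0r addr0 -{1}[one]addr0.
  by move=> /addrI/esym/eqP; rewrite scaler_eq0 (negPf w0) orbF => /eqP.
have q0 : q = 0.
  apply: contraTeq two_neq0 => q0; rewrite negbK; apply/eqP.
  by apply: (no_defect (comb3 one z w 1 (-1) ((r + 1) / q)) (comb3 one z w 0 0 1));
    rewrite table; congr comb3; field_nz.
subst q.
have r0 : r = 0.
  apply: contraTeq two_neq0 => r0; rewrite negbK.
  have /eqP : - 2%:R / r = 0.
    by apply: (no_defect (comb3 one z w 1 (-1) 0) (comb3 one z w 0 0 (- r^-1)));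
      rewrite table; congr comb3; field_nz.
  by rewrite mulf_eq0 invr_eq0 oppr_eq0 (negPf r0) orbF.
subst r.
have p1 : p = 1.
  apply: contraTeq two_neq0 => p1; rewrite negbK; apply/eqP.
  have p1' : 1 - p != 0 by rewrite subr_eq0 eq_sym.
  by apply: (no_defect (comb3 one z w 1 (-1) 0)
                       (comb3 one z w (1 / (1 - p)) (1 / (1 - p)) 1));
    rewrite table; congr comb3; field_nz.
subst p.
by rewrite zz ww zw wz scale1r !scale0r add0r sub0r.
Qed.

Lemma standard_relations_iso_U z w : lin_indep3 one z w ->
  mul z z = one -> mul w w = 0 -> mul z w = w -> mul w z = - w ->
  iso_to_U mul (span3 one z w).
Proof.
move=> ind zz ww zw wz.
have := @comb3_mul_table z w 1 0 0; rewrite scale1r scale0r add0r sub0r.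
move=> /(_ zz ww zw wz) table.
have half_sum_diff (x y : F) :
    x = (x + y) / 2%:R + (x - y) / 2%:R /\ y = (x + y) / 2%:R - (x - y) / 2%:R.
  by split; field_nz.
(* [g] sends [diag 1 (-1)] to [z] and the matrix unit [E_12] to [w]. *)
pose g (M : 'M[F]_2) := comb3 one z w ((M ord0 ord0 + M ord_max ord_max) / 2%:R)
  ((M ord0 ord0 - M ord_max ord_max) / 2%:R) (M ord0 ord_max).
exists g; split.
- by move=> a M N _ _; rewrite /g !mxE comb3Z comb3D; congr comb3; field_nz.
- by move=> M _; do 3!eexists.
- move=> _ [a [b [c ->]]].
  exists (\matrix_(i, j) if i == ord0 then (if j == ord0 then a + b else c)
                         else (if j == ord0 then 0 else a - b)).
    by elim/ord2_ind; elim/ord2_ind => // _; rewrite mxE.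
  by rewrite /g !mxE /=; congr comb3; field_nz.
- move=> M N uM uN /(comb3_inj ind) [E0 E1 E2]; apply/matrixP.
  elim/ord2_ind; elim/ord2_ind => //.
  + by rewrite (half_sum_diff (M ord0 ord0) (M ord_max ord_max)).1 E0 E1
      -(half_sum_diff _ _).1.
  + by rewrite uM ?uN.
  + by rewrite (half_sum_diff (M ord0 ord0) (M ord_max ord_max)).2 E0 E1
      -(half_sum_diff _ _).2.
- move=> M N uM uN.
  rewrite /g table !mulmx2E (uM ord_max ord0 isT) (uN ord_max ord0 isT).
  by congr comb3; field_nz.
Qed.

Lemma double_eq0 (a : F) : a + a = 0 -> a = 0.
Proof. by move/eqP; rewrite -mulr2n -mulr_natr mulf_eq0 (negPf two_neq0) orbF => /eqP. Qed.

Lemma bar_comb3 u v a b c : skew u -> skew v ->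
  bar (comb3 one u v a b c) = comb3 one u v a (- b) (- c).
Proof. by move=> su sv; rewrite /comb3 !barD !barZ bar1 su sv !scalerN !scaleNr. Qed.

Lemma skew_indep u v : one != 0 -> skew u -> skew v -> commutator u v != 0 ->
  lin_indep3 one u v.
Proof.
move=> one0 su sv uv0 a b c abc.
have uv_scale0 k : k *: commutator u v = 0 -> k = 0.
  by move/eqP; rewrite scaler_eq0 (negPf uv0) orbF => /eqP.
have a0 : a = 0.
  have : comb3 one u v (a + a) (b - b) (c - c) = 0.
    by rewrite -comb3D -bar_comb3 // [comb3 _ _ _ a b c]abc bar0 addr0.
  rewrite !subrr -comb3_e1 => /eqP; rewrite scaler_eq0 (negPf one0) orbF.
  by move/eqP/double_eq0.
have buv : b *: u + c *: v = 0 by rewrite -abc a0 scale0r add0r.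
split=> //; apply: uv_scale0; first exact: commutator_lin_dep buv.
apply/eqP; rewrite -oppr_eq0 -scalerN -commutatorC; apply/eqP.
by apply: (commutator_lin_dep (b := c) (c := b)); rewrite addrC.
Qed.

Lemma skew_span_decomp u v x : lin_indep3 one u v -> skew u -> skew v -> skew x ->
  span3 one u v x -> exists b c, x = b *: u + c *: v.
Proof.
move=> ind su sv sx [a [b [c xE]]]; exists b, c.
have : comb3 one u v a (- b) (- c) = comb3 one u v (- a) (- b) (- c).
  by rewrite -bar_comb3 // -comb3N -[comb3 _ _ _ a b c]xE.
case/(comb3_inj ind) => /eqP; rewrite -addr_eq0 => /eqP/double_eq0 a0 _ _.
by rewrite xE a0 scale0r add0r.
Qed.

Lemma noncomm_standard_pair e1 e2 e3 : lin_indep3 e1 e2 e3 ->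
  is_subalg mul one (span3 e1 e2 e3) -> ~ commutative_on mul (span3 e1 e2 e3) ->
  exists z w, [/\ span3 e1 e2 e3 z, span3 e1 e2 e3 w & standard_pair z w].
Proof.
move=> ind [S1 S_mul] noncomm.
have [x [y [Sx Sy xy]]] :
    exists x y, [/\ span3 e1 e2 e3 x, span3 e1 e2 e3 y & commutator x y != 0].
  apply: NNPP => none; apply: noncomm => x y Sx Sy.
  by apply/eqP; rewrite -subr_eq0; apply/negPn/negP => xy; apply: none; exists x, y.
have [t xt] := bar_inv.2.1 x; have [t' yt'] := bar_inv.2.1 y.
pose u := x - (t / 2%:R) *: one; pose v := y - (t' / 2%:R) *: one.
have su : skew u := skew_part xt; have sv : skew v := skew_part yt'.
have Su : span3 e1 e2 e3 u by apply: span3B => //; apply: span3Z.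
have Sv : span3 e1 e2 e3 v by apply: span3B => //; apply: span3Z.
have uv0 : commutator u v != 0 by rewrite commutator_shift.
have ind_uv := skew_indep (indep3_one_neq0 ind) su sv uv0.
have Suv : span3 e1 e2 e3 (commutator u v) by apply: span3B; apply: S_mul.
have [b [g uvE]] := skew_span_decomp ind_uv su sv (skew_commutator su sv)
  (span3_basis S1 Su Sv ind_uv Suv).
have [g0|g0] := eqVneq g 0.
- have b0 : - b != 0.
    by rewrite oppr_eq0; apply: contraNneq uv0 => b0; rewrite uvE b0 g0 !scale0r addr0.
  have vuE : commutator v u = 0 *: v + (- b) *: u.
    by rewrite commutatorC uvE g0 !scale0r addr0 add0r scaleNr.
  exists ((2%:R / - b) *: v), (commutator v u); split.
  + exact: span3Z.
  + by apply: span3B; apply: S_mul.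
  + split; [exact: skewZ | exact: skew_commutator | by rewrite commutatorC oppr_eq0 |].
    exact: commutator_eigen vuE b0.
- exists ((2%:R / g) *: u), (commutator u v); split=> //; first exact: span3Z.
  split; [exact: skewZ | exact: skew_commutator | by [] |].
  exact: commutator_eigen uvE g0.
Qed.

Definition subalg3_comm_or (P : (V -> Prop) -> Prop) :=
  forall e1 e2 e3, lin_indep3 e1 e2 e3 -> is_subalg mul one (span3 e1 e2 e3) ->
  commutative_on mul (span3 e1 e2 e3) \/ P (span3 e1 e2 e3).

Lemma vN_finite_subalg_comm_or_U :
  vN_finite mul one -> subalg3_comm_or (iso_to_U mul).
Proof.
move=> vN e1 e2 e3 ind S_alg.
have [|noncomm] := classic (commutative_on mul (span3 e1 e2 e3)); [by left | right].
have [z [w [Sz Sw std]]] := noncomm_standard_pair ind S_alg noncomm.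
have [zz ww zw wz] := standard_pair_relations vN std.
have [sz sw w0 zw2] := std.
have ind_zw : lin_indep3 one z w.
  apply: skew_indep (indep3_one_neq0 ind) sz sw _.
  by rewrite zw2 scaler_eq0 negb_or two_neq0.
apply: iso_to_U_eq (standard_relations_iso_U ind_zw zz ww zw wz).
exact: span3_eq S_alg.1 Sz Sw ind_zw.
Qed.

Lemma subalg_comm_or_U_assoc :
  subalg3_comm_or (iso_to_U mul) -> subalg3_comm_or (associative_on mul).
Proof.
move=> H e1 e2 e3 ind S_alg.
by case: (H e1 e2 e3 ind S_alg) => [|/iso_to_U_assoc]; [left | right].
Qed.

Lemma comm_span1 x k l : mul (k *: one + l *: x) x = mul x (k *: one + l *: x).
Proof. by rewrite amulDl amulDr !amulZl !amulZr amul1l amul1r. Qed.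

Lemma lin_dep_commute a b : ~ lin_indep3 one a b -> mul a b = mul b a.
Proof.
move=> dep.
have [k [l [m [klm nontriv]]]] : exists k l m,
    k *: one + l *: a + m *: b = 0 /\ ~ [/\ k = 0, l = 0 & m = 0].
  apply: NNPP => none; apply: dep => k l m klm.
  by apply: NNPP => nontriv; apply: none; exists k, l, m.
have [m0|m0] := eqVneq m 0; last by rewrite (comb3_solve m0 klm) comm_span1.
have [l0|l0] := eqVneq l 0.
  have k0 : k != 0 by apply/eqP => k0; apply: nontriv.
  have one0 : one = 0.
    by move/eqP: klm; rewrite l0 m0 !scale0r !addr0 scaler_eq0 (negPf k0) => /eqP.
  by rewrite (one_eq0_trivial one0 (mul a b)) (one_eq0_trivial one0 (mul b a)).
have kbl : k *: one + m *: b + l *: a = 0 by rewrite m0 scale0r addr0 in klm *; rewrite addr0.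
by rewrite (comb3_solve l0 kbl) comm_span1.
Qed.

Lemma span3_one_subalg a b : span3 one a b (mul a b) -> is_subalg mul one (span3 one a b).
Proof.
move=> Sab; split; first exact: span3_e1.
have Ssq x : span3 one a b x -> span3 one a b (mul x x).
  have [t [n ->]] := sqr_quadratic x.
  by move=> Sx; apply: span3B; apply: span3Z => //; apply: span3_e1.
have Sa := span3_e2 one a b; have Sb := span3_e3 one a b.
have Sba : span3 one a b (mul b a).
  have := span3B (Ssq _ (span3D Sa Sb)) (span3D (Ssq _ Sa) Sab).
  rewrite amulDl !amulDr [X in X - _]addrC addrK => /span3B/(_ (Ssq _ Sb)).
  by rewrite addrK.
move=> x y [a1 [a2 [a3 ->]]] [b1 [b2 [b3 ->]]].
rewrite -![_ + _ + _]/(comb3 one a b _ _ _) amul_comb3 !amul1l !amul1r.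
repeat apply: span3D; apply: span3Z => //; try exact: span3_e1.
all: exact: Ssq.
Qed.

Lemma right_inverse_assoc_dep a b : mul a b = one ->
  mul a (mul a b) = mul (mul a a) b -> ~ lin_indep3 one a b.
Proof.
move=> ab1 assoc ind; have [t [n aa]] := sqr_quadratic a.
move: assoc; rewrite ab1 amul1r aa amulBl !amulZl ab1 amul1l => a_tnb.
have : t *: one + (-1) *: a + (- n) *: b = 0.
  by rewrite a_tnb scaleN1r opprB addrCA subrr addr0 scaleNr subrr.
by case/ind => _ /eqP; rewrite oppr_eq0 oner_eq0.
Qed.

Lemma subalg_comm_or_assoc_vN_finite :
  subalg3_comm_or (associative_on mul) -> vN_finite mul one.
Proof.
move=> H a b ab1.
have [ind|dep] := classic (lin_indep3 one a b); last by rewrite -(lin_dep_commute dep).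
have Sa := span3_e2 one a b; have Sb := span3_e3 one a b.
have S_alg : is_subalg mul one (span3 one a b).
  by apply: span3_one_subalg; rewrite ab1; apply: span3_e1.
case: (H _ _ _ ind S_alg) => [comm | assoc]; first by rewrite comm.
by case: (right_inverse_assoc_dep ab1 (assoc a a b Sa Sa Sb)).
Qed.

End InvolutiveAlgebra.

Theorem proposition4p8 (F : fieldType) (V : lmodType F)
    (mul : V -> V -> V) (one : V) (bar : V -> V) :
  (2%:R : F) != 0 ->
  bilinear_mul mul -> is_unit_elt mul one -> involutive_alg mul one bar ->
  (vN_finite mul one <->
   (forall e1 e2 e3 : V, lin_indep3 e1 e2 e3 ->
      is_subalg mul one (span3 e1 e2 e3) ->
      commutative_on mul (span3 e1 e2 e3) \/ associative_on mul (span3 e1 e2 e3)))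
  /\
  (vN_finite mul one <->
   (forall e1 e2 e3 : V, lin_indep3 e1 e2 e3 ->
      is_subalg mul one (span3 e1 e2 e3) ->
      commutative_on mul (span3 e1 e2 e3) \/ iso_to_U mul (span3 e1 e2 e3))).
Proof.
move=> two_neq0 mul_bilin mul_unit bar_inv.
have i_iii := vN_finite_subalg_comm_or_U two_neq0 mul_bilin mul_unit bar_inv.
have ii_i := subalg_comm_or_assoc_vN_finite mul_bilin mul_unit bar_inv.
have iii_ii := @subalg_comm_or_U_assoc F V mul one.
split; split.
- by move/i_iii/iii_ii.
- exact: ii_i.
- exact: i_iii.
- by move/iii_ii/ii_i.
Qed.
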